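(* Let $G=(V,v,E)$ be a directed graph with $V=\{1,\dots,n\}$, target node $v$, edge set $E$, and let $Z$ be a set of ordered node pairs with $Z\cap E=\emptyset$. For $\mathbf{y}\in\{0,1\}^{Z}$ with support $Y$, let $\mathcal{FR}(\mathbf{y})\ge0$ be the expected first return time to $v$ of the PageRank random walk on $(V,E\cup Y)$. Let $\mathcal{Y}$ be a constraint set with $\mathcal{Y}\cap\{0,1\}^{Z}\ne\emptyset$, and consider the problem $\min\{\mathcal{FR}(\mathbf{y}):\mathbf{y}\in\mathcal{Y}\cap\{0,1\}^{Z}\}$. For disjoint $S,N\subseteq Z$ let $\gamma(S,N)=\min\{\mathcal{FR}(\mathbf{y}): y_e=1\ \forall e\in S,\ y_e=0\ \forall e\in N,\ \mathbf{y}\in\{0,1\}^{Z}\}$. For $\bar{\mathbf{y}}\in\mathcal{Y}\cap\{0,1\}^{Z}$ with support $\bar Y$ define the cut $\mathrm{C}_1(\bar{\mathbf{y}})$: $\theta\ge\mathcal{FR}(\bar{\mathbf{y}})+\sum_{e\in\bar Y}\min\{0,\gamma(\emptyset,\{e\})-\mathcal{FR}(\bar{\mathbf{y}})\}(1-y_e)+\sum_{e\in Z\setminus\bar Y}\min\{0,\gamma(\{e\},\emptyset)-\mathcal{FR}(\bar{\mathbf{y}})\}y_e$, and, for a chosen ordering $e^1,\dots,e^K$ of $Z\setminus\bar Y$, the cut $\mathrm{C}_2(\bar{\mathbf{y}})$: $\theta\ge\mathcal{FR}(\bar{\mathbf{y}})+\sum_{e\in\bar Y}\min\{0,\gamma(\emptyset,\{e\})-\mathcal{FR}(\bar{\mathbf{y}})\}(1-y_e)+\sum_{k=1}^{K}\min\{0,-\mathcal{FR}(\bar{\mathbf{y}})+\gamma(\{e^k\},\{e^{k+1},\dots,e^K\})\}y_{e^k}$.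 Fix one of the two families $\mathrm{C}\in\{\mathrm{C}_1,\mathrm{C}_2\}$ and consider the cutting plane method: start with an empty cut set $\mathcal{C}$; repeatedly solve the relaxed master problem $\min\{\theta:(\theta,\mathbf{y})\text{ satisfies all cuts in }\mathcal{C},\ \mathbf{y}\in\mathcal{Y}\cap\{0,1\}^{Z},\ \theta\in\mathbb{R}_+\}$ to obtain an optimal $(\theta^*,\mathbf{y}^* )$; if $\theta^*\ge\mathcal{FR}(\mathbf{y}^* )$ stop, otherwise add the cut $\mathrm{C}(\mathbf{y}^* )$ to $\mathcal{C}$ and repeat. Then this method terminates after finitely many iterations, and at termination $\mathbf{y}^*$ is an optimal solution of $\min\{\mathcal{FR}(\mathbf{y}):\mathbf{y}\in\mathcal{Y}\cap\{0,1\}^{Z}\}$. Equivalently, this problem has the same optimal value as $\min\{\theta: (\theta,\mathbf{y})\text{ satisfies }\mathrm{C}(\bar{\mathbf{y}})\ \forall\bar{\mathbf{y}}\in\mathcal{Y}\cap\{0,1\}^{Z},\ \mathbf{y}\in\mathcal{Y}\cap\{0,1\}^{Z},\ \theta\in\mathbb{R}_+\}$.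
   Context: The PageRank random walk is the random walk defined by the PageRank (Google) matrix with fixed damping and teleportation, as in Csáji–Jungers–Blondel; the expected first return time to $v$ is the expected number of steps for the walk started at $v$ to return to $v$ (the reciprocal of $v$'s PageRank). *)

From mathcomp Require Import all_boot all_order all_algebra.
Set Implicit Arguments. Unset Strict Implicit. Unset Printing Implicit Defensive.
Import Order.TTheory GRing.Theory Num.Theory.
Local Open Scope ring_scope.

(* Nodes are 'I_n; ordered node pairs (edges / candidate edges) are 'I_n * 'I_n.
   A binary vector y in {0,1}^Z is represented by its support Y : {set pair}
   with Y \subset Z; y_e = (e \in Y)%:R. *)
Notation pair n := ('I_n * 'I_n)%type.

Section PageRank.
Variables (R : realFieldType) (n : nat).
Variable alpha : R.
Variable z : 'I_n -> R.
Variable v : 'I_n.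

Definition outdeg (A : {set pair n}) (u : 'I_n) : nat :=
  #|[set w | (u, w) \in A]|.

(* transition matrix of the simple random walk on (V, A); a dangling node
   (no out-edge) jumps according to the teleportation distribution z *)
Definition walk_mx (A : {set pair n}) : 'M[R]_n :=
  \matrix_(u, w) (if outdeg A u == 0%N then z w
                  else ((u, w) \in A)%:R / (outdeg A u)%:R).

Definition google_mx (A : {set pair n}) : 'M[R]_n :=
  \matrix_(u, w) (alpha * walk_mx A u w + (1 - alpha) * z w).

(* Google matrix with transitions into v removed (walk killed on hitting v) *)
Definition killed_mx (A : {set pair n}) : 'M[R]_n :=
  \matrix_(u, w) (if w == v then 0 else google_mx A u w).

(* h u = expected number of steps for the PageRank walk started at u to reach v
   at a time >= 1; it is the solution of the hitting-time equations
     h u = 1 + \sum_(w != v) G u w * h w,   i.e.  h = (I - G_killed)^-1 1. *)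
Definition hitting_times (A : {set pair n}) : 'cV[R]_n :=
  invmx (1%:M - killed_mx A) *m const_mx 1.

Definition first_return_time (A : {set pair n}) : R := hitting_times A v 0.

End PageRank.

Section Cuts.
Variables (R : realFieldType) (n : nat).
Variable FR : {set pair n} -> R.
Variable Z : {set pair n}.

(* gamma(S,N) = min { FR(y) : y_e = 1 on S, y_e = 0 on N, y in {0,1}^Z }.
   (The seed FR S is itself attained when S \subset Z and S, N disjoint.) *)
Definition gamma (S N : {set pair n}) : R :=
  \big[Num.min/FR S]_(Y in powerset Z | (S \subset Y) && [disjoint Y & N]) FR Y.

Definition yv (Y : {set pair n}) (e : pair n) : R := (e \in Y)%:R.

Definition cut1 (Yb Y : {set pair n}) : R :=
  FR Yb
  + \sum_(e in Yb) Num.min 0 (gamma set0 [set e] - FR Yb) * (1 - yv Y e)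
  + \sum_(e in Z :\: Yb) Num.min 0 (gamma [set e] set0 - FR Yb) * yv Y e.

(* right-hand side of cut C2(Yb) for the ordering s = [:: e^1; ...; e^K]
   of Z \ Yb, evaluated at y = Y *)
Definition cut2 (s : seq (pair n)) (Yb Y : {set pair n}) : R :=
  FR Yb
  + \sum_(e in Yb) Num.min 0 (gamma set0 [set e] - FR Yb) * (1 - yv Y e)
  + \sum_(k < size s)
      Num.min 0 (- FR Yb + gamma [set tnth (in_tuple s) k] [set x in drop k.+1 s])
        * yv Y (tnth (in_tuple s) k).

End Cuts.

(* which family of cuts is used; for C2 an ordering of Z \ Yb is chosen
   for every Yb by the function [ord] *)
Inductive cut_family (n : nat) :=
| C1
| C2 of ({set pair n} -> seq (pair n)).

Definition cutrhs (R : realFieldType) (n : nat) (FR : {set pair n} -> R)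
  (Z : {set pair n}) (C : cut_family n) (Yb Y : {set pair n}) : R :=
  match C with
  | C1 => cut1 FR Z Yb Y
  | C2 ord => cut2 FR Z (ord Yb) Yb Y
  end.

Definition valid_family (n : nat) (Z : {set pair n}) (C : cut_family n) : Prop :=
  match C with
  | C1 => True
  | C2 ord => forall Yb, uniq (ord Yb) /\ (forall e, (e \in ord Yb) = (e \in Z :\: Yb))
  end.

Section Master.
Variables (R : realFieldType) (n : nat).
Variable FR : {set pair n} -> R.
Variables (Z : {set pair n}) (Ycal : {set pair n} -> Prop) (C : cut_family n).

Definition feasible (Y : {set pair n}) : Prop := Y \subset Z /\ Ycal Y.

Definition master_feas (cuts : {set pair n} -> Prop) (theta : R) (Y : {set pair n}) :=
  [/\ 0 <= theta, feasible Y & forall Yb, cuts Yb -> cutrhs FR Z C Yb Y <= theta].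

Definition master_opt (cuts : {set pair n} -> Prop) (theta : R) (Y : {set pair n}) :=
  master_feas cuts theta Y /\
  forall theta' Y', master_feas cuts theta' Y' -> theta <= theta'.

(* a run of the cutting plane method that has not stopped yet:
   iterate k (theta_k, Y_k) is optimal for the master problem with the cuts
   C(Y_0), ..., C(Y_{k-1}), and the stopping test theta_k >= FR(Y_k) failed *)
Definition nonstop_run (s : seq (R * {set pair n})) : Prop :=
  forall k, (k < size s)%N ->
    let: (theta, Y) := nth (0, set0) s k in
    master_opt (fun Yb => Yb \in map snd (take k s)) theta Y /\ theta < FR Y.

Definition optimal (Y : {set pair n}) : Prop :=
  feasible Y /\ forall Y', feasible Y' -> FR Y <= FR Y'.

End Master.

From mathcomp Require Import all_boot all_order all_algebra.
From mathcomp Require Import boolp lra.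
Set Implicit Arguments.
Unset Strict Implicit.
Unset Printing Implicit Defensive.
Import Order.TTheory GRing.Theory Num.Theory.
Local Open Scope ring_scope.

(* Each cut C(ybar) is a lower bound for FR on {0,1}^Z that is tight at ybar.
   Tightness is clear since every penalty term vanishes at y = ybar. For
   validity at y <> ybar, all penalty terms are nonpositive and one flipped
   coordinate e already pays at most gamma - FR(ybar) <= FR(y) - FR(ybar),
   because y is admissible in the minimum defining that gamma; for C2, e is
   the last e^k with y_e = 1, so that y vanishes on e^(k+1), ..., e^K.
   Validity makes (FR(y), y) feasible for every master problem, so an iterate
   passing the stopping test is optimal; tightness shows that an iterate
   failing it was not cut before, so the cuts added are pairwise distinct and
   the method stops after at most 2^|Z| iterations. Finally FR >= 0, being a
   hitting time of a substochastic matrix. *)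

Lemma exists_argmin (T : finType) (R : realDomainType) (P : T -> Prop) (f : T -> R) :
  (exists x, P x) -> exists2 x, P x & forall y, P y -> f x <= f y.
Proof.
case=> x0 /asboolP Px0.
case: (@arg_minP _ _ _ x0 (fun x => `[< P x >]) f Px0) => x /asboolP Px x_min.
by exists x => // y /asboolP /x_min.
Qed.

Lemma uniq_nth_notin_take (T : eqType) (x0 : T) (s : seq T) :
  (forall k, (k < size s)%N -> nth x0 s k \notin take k s) -> uniq s.
Proof.
move=> fresh; suff uniq_take k : (k <= size s)%N -> uniq (take k s).
  by have := uniq_take _ (leqnn _); rewrite take_size.
elim: k => [|k IHk] ks; first by rewrite take0.
by rewrite (take_nth x0 ks) rcons_uniq fresh // IHk // ltnW.
Qed.

Lemma has_last_index (T : eqType) (a : pred T) (s : seq T) : has a s ->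
  exists k : 'I_(size s), a (tnth (in_tuple s) k) && ~~ has a (drop k.+1 s).
Proof.
move=> has_s; have [x0 _ _] := hasP has_s.
have exP : exists k, (k < size s)%N && a (nth x0 s k).
  by case/(has_nthP x0): has_s => k ks ak; exists k; rewrite ks.
have ubP k : (k < size s)%N && a (nth x0 s k) -> (k <= size s)%N.
  by case/andP=> /ltnW.
case: (ex_maxnP exP ubP) => k /andP[ks ak] k_max.
exists (Ordinal ks); rewrite (tnth_nth x0) /= ak /=.
apply/(has_nthP x0) => -[j]; rewrite size_drop nth_drop ltn_subRL => js aj.
by have := k_max _ (introT andP (conj js aj)); rewrite addSn ltnNge leq_addr.
Qed.

Section PenaltySum.
Variables (R : realDomainType) (I : finType) (a b : I -> R).
Hypothesis b_ge0 : forall i, 0 <= b i.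

Lemma penalty_sum_le0 (P : pred I) : \sum_(i | P i) Num.min 0 (a i) * b i <= 0.
Proof. by apply: sumr_le0 => i _; rewrite mulr_le0_ge0 // ge_min lexx. Qed.

Lemma penalty_sum_le (P : pred I) i : P i -> b i = 1 ->
  \sum_(j | P j) Num.min 0 (a j) * b j <= a i.
Proof.
move=> Pi bi1; rewrite (bigD1 i) //= bi1 mulr1 -[leRHS]addr0.
by rewrite lerD ?penalty_sum_le0 // ge_min lexx orbT.
Qed.

End PenaltySum.

Section CutValidity.
Variables (R : realFieldType) (n : nat) (FR : {set pair n} -> R) (Z : {set pair n}).

Lemma yv_ge0 (Y : {set pair n}) e : 0 <= yv R Y e.
Proof. exact: ler0n. Qed.

Lemma yvC_ge0 (Y : {set pair n}) e : 0 <= 1 - yv R Y e.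
Proof. by rewrite subr_ge0 lern1 leq_b1. Qed.

Lemma gamma_le_FR (S N Y : {set pair n}) :
  Y \subset Z -> S \subset Y -> [disjoint Y & N] -> gamma FR Z S N <= FR Y.
Proof. by move=> YZ SY YN; apply: bigmin_le_cond; rewrite powersetE YZ SY. Qed.

Lemma removal_penalty_tight (Y : {set pair n}) :
  \sum_(e in Y) Num.min 0 (gamma FR Z set0 [set e] - FR Y) * (1 - yv R Y e) = 0.
Proof. by rewrite big1 // => e eY; rewrite /yv eY subrr mulr0. Qed.

Lemma removal_penalty_le (Yb Y : {set pair n}) e :
  Y \subset Z -> e \in Yb -> e \notin Y ->
  \sum_(e in Yb) Num.min 0 (gamma FR Z set0 [set e] - FR Yb) * (1 - yv R Y e)
  <= FR Y - FR Yb.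
Proof.
move=> YZ eYb eY; pose a e := gamma FR Z set0 [set e] - FR Yb.
apply: le_trans (penalty_sum_le a (yvC_ge0 Y) eYb _) _.
  by rewrite /yv (negbTE eY) subr0.
by rewrite lerD2r gamma_le_FR ?sub0set // disjoint_sym disjoints1.
Qed.

Lemma addition_penalty1_le (Yb Y : {set pair n}) e :
  Y \subset Z -> e \notin Yb -> e \in Y ->
  \sum_(e in Z :\: Yb) Num.min 0 (gamma FR Z [set e] set0 - FR Yb) * yv R Y e
  <= FR Y - FR Yb.
Proof.
move=> YZ eYb eY; have eZYb : e \in Z :\: Yb by rewrite inE eYb (subsetP YZ).
pose a e := gamma FR Z [set e] set0 - FR Yb.
apply: le_trans (penalty_sum_le a (yv_ge0 Y) eZYb _) _; first by rewrite /yv eY.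
by rewrite lerD2r gamma_le_FR ?sub1set // disjoints_subset setC0 subsetT.
Qed.

Lemma addition_penalty2_le s (Yb Y : {set pair n}) : Y \subset Z -> has (mem Y) s ->
  \sum_(k < size s)
     Num.min 0 (- FR Yb + gamma FR Z [set tnth (in_tuple s) k] [set x in drop k.+1 s])
       * yv R Y (tnth (in_tuple s) k)
  <= FR Y - FR Yb.
Proof.
move=> YZ /has_last_index[k /andP[ekY no_later]].
pose a (k : 'I_(size s)) :=
  - FR Yb + gamma FR Z [set tnth (in_tuple s) k] [set x in drop k.+1 s].
apply: le_trans (penalty_sum_le a (fun k => yv_ge0 Y _) (isT : xpredT k) _) _.
  by have ekY' : tnth (in_tuple s) k \in Y := ekY; rewrite /yv ekY'.
rewrite /a addrC lerD2r gamma_le_FR ?sub1set //.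
rewrite disjoints_subset; apply/subsetP => x xY; rewrite !inE.
by apply: contra no_later => x_later; apply/hasP; exists x.
Qed.

Lemma cut_le_FR_of_penalties (Yb Y : {set pair n}) (A B : R) :
  Y != Yb -> A <= 0 -> B <= 0 ->
  (forall e, e \in Yb -> e \notin Y -> A <= FR Y - FR Yb) ->
  (forall e, e \notin Yb -> e \in Y -> B <= FR Y - FR Yb) ->
  FR Yb + A + B <= FR Y.
Proof.
move=> neq A_le0 B_le0 A_le B_le.
have [/subsetPn[e eYb eY] | YbY] := boolP (~~ (Yb \subset Y)).
  by have := A_le e eYb eY; lra.
have [e eY eYb] : exists2 e, e \in Y & e \notin Yb.
  by apply/subsetPn; rewrite eqEsubset (negbNE YbY) andbT in neq.
by have := B_le e eYb eY; lra.
Qed.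

Lemma cut1_tight (Y : {set pair n}) : cut1 FR Z Y Y = FR Y.
Proof.
rewrite /cut1 removal_penalty_tight big1 ?addr0 // => e /setDP[_ /negbTE eY].
by rewrite /yv eY mulr0.
Qed.

Lemma cut1_le_FR (Yb Y : {set pair n}) : Y \subset Z -> cut1 FR Z Yb Y <= FR Y.
Proof.
move=> YZ; have [->|neq] := eqVneq Y Yb; first by rewrite cut1_tight.
rewrite /cut1; apply: cut_le_FR_of_penalties neq _ _ _ _.
- by apply: penalty_sum_le0 => e; exact: yvC_ge0.
- by apply: penalty_sum_le0 => e; exact: yv_ge0.
- by move=> e; exact: removal_penalty_le.
- by move=> e; exact: addition_penalty1_le.
Qed.

Lemma cut2_tight s (Y : {set pair n}) : s =i Z :\: Y -> cut2 FR Z s Y Y = FR Y.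
Proof.
move=> s_def; rewrite /cut2 removal_penalty_tight big1 ?addr0 // => k _.
have /setDP[_ /negbTE ekY] : tnth (in_tuple s) k \in Z :\: Y by rewrite -s_def mem_tnth.
by rewrite /yv ekY mulr0.
Qed.

Lemma cut2_le_FR s (Yb Y : {set pair n}) :
  s =i Z :\: Yb -> Y \subset Z -> cut2 FR Z s Yb Y <= FR Y.
Proof.
move=> s_def YZ; have [->|neq] := eqVneq Y Yb; first by rewrite cut2_tight.
rewrite /cut2; apply: cut_le_FR_of_penalties neq _ _ _ _.
- by apply: penalty_sum_le0 => e; exact: yvC_ge0.
- by apply: penalty_sum_le0 => e; exact: yv_ge0.
- by move=> e; exact: removal_penalty_le.
move=> e eYb eY; apply: addition_penalty2_le => //; apply/hasP; exists e => //.
by rewrite s_def inE eYb (subsetP YZ).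
Qed.

Lemma cutrhs_tight C (Y : {set pair n}) : valid_family Z C -> cutrhs FR Z C Y Y = FR Y.
Proof. by case: C => [_|ord /(_ Y)[_ ord_def]] /=; rewrite ?cut1_tight ?cut2_tight. Qed.

Lemma cutrhs_le_FR C (Yb Y : {set pair n}) :
  valid_family Z C -> Y \subset Z -> cutrhs FR Z C Yb Y <= FR Y.
Proof.
case: C => [_|ord /(_ Yb)[_ ord_def]] YZ /=; first exact: cut1_le_FR.
exact: cut2_le_FR.
Qed.

End CutValidity.

Lemma hitting_times_ge0 (R : realFieldType) (n : nat) (K : 'M[R]_n) :
  (forall u w, 0 <= K u w) -> (forall u, \sum_w K u w <= 1) ->
  forall u, 0 <= (invmx (1%:M - K) *m (const_mx 1 : 'cV_n)) u 0.
Proof.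
move=> K_ge0 K_sub u; set h := invmx _ *m _.
have [K_unit|K_nunit] := boolP (1%:M - K \in unitmx); last first.
  (* [invmx] is the identity on singular matrices. *)
  rewrite /h invmx_out // mulmxBl mul1mx !mxE subr_ge0.
  by under eq_bigr do rewrite mxE mulr1.
have h_sol : (1%:M - K) *m h = const_mx 1 by rewrite /h mulmxA mulmxV ?mul1mx.
clearbody h; have h_eq w : h w 0 = 1 + \sum_x K w x * h x 0.
  have := congr1 (fun M : 'cV_n => M w 0) h_sol.
  by rewrite mulmxBl mul1mx !mxE => /eqP; rewrite subr_eq => /eqP.
(* At a minimal entry m, h m = 1 + \sum_x K m x * h x >= 1 + h m if h m < 0. *)
have [m _ m_min] := exists_argmin (fun w => h w 0) (ex_intro _ u I).
apply: le_trans (m_min u I); rewrite leNgt; apply/negP => m_lt0.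
have lb : (\sum_x K m x) * h m 0 <= \sum_x K m x * h x 0.
  by rewrite mulr_suml; apply: ler_sum => x _; rewrite ler_wpM2l ?m_min.
have S_ge0 : 0 <= \sum_x K m x by apply: sumr_ge0 => x _.
move: lb S_ge0 (K_sub m) (h_eq m) m_lt0.
move: (\sum_x K m x) (\sum_x K m x * h x 0) (h m 0) => S T hm; nra.
Qed.

Section PageRank.
Variables (R : realFieldType) (n : nat) (alpha : R) (z : 'I_n -> R) (v : 'I_n).
Hypotheses (alpha_ge0 : 0 <= alpha) (alpha_le1 : alpha <= 1).
Hypotheses (z_ge0 : forall u, 0 <= z u) (z_sum1 : \sum_u z u = 1).

Lemma sum_edge_indicator (A : {set pair n}) u :
  \sum_w (((u, w) \in A)%:R : R) = (outdeg A u)%:R.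
Proof.
rewrite /outdeg -sum1_card natr_sum [RHS]big_mkcond /=.
by apply: eq_bigr => w _; rewrite inE; case: (_ \in A).
Qed.

Lemma walk_mx_ge0 A u w : 0 <= walk_mx z A u w.
Proof. by rewrite mxE; case: eqP => // _; rewrite divr_ge0 ?ler0n. Qed.

Lemma walk_mx_row_sum A u : \sum_w walk_mx z A u w = 1.
Proof.
under eq_bigr do rewrite mxE.
case: eqP => [//|/eqP deg_neq0].
by rewrite -mulr_suml sum_edge_indicator mulfV // pnatr_eq0.
Qed.

Lemma google_mx_ge0 A u w : 0 <= google_mx alpha z A u w.
Proof. by rewrite mxE addr_ge0 ?mulr_ge0 ?walk_mx_ge0 ?subr_ge0. Qed.

Lemma google_mx_row_sum A u : \sum_w google_mx alpha z A u w = 1.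
Proof.
under eq_bigr do rewrite mxE.
by rewrite big_split /= -!mulr_sumr walk_mx_row_sum z_sum1 !mulr1 addrC subrK.
Qed.

Lemma killed_mx_ge0 A u w : 0 <= killed_mx alpha z v A u w.
Proof. by rewrite mxE; case: eqP => // _; exact: google_mx_ge0. Qed.

Lemma killed_mx_row_sum_le1 A u : \sum_w killed_mx alpha z v A u w <= 1.
Proof.
rewrite -(google_mx_row_sum A u); apply: ler_sum => w _.
by rewrite mxE; case: eqP => // _; exact: google_mx_ge0.
Qed.

Lemma first_return_time_ge0 A : 0 <= first_return_time alpha z v A.
Proof. exact/hitting_times_ge0/killed_mx_row_sum_le1/killed_mx_ge0. Qed.

End PageRank.

Section CuttingPlane.
Variables (R : realFieldType) (n : nat) (FR : {set pair n} -> R).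
Variables (Z : {set pair n}) (Ycal : {set pair n} -> Prop) (C : cut_family n).
Hypothesis FR_ge0 : forall Y, feasible Z Ycal Y -> 0 <= FR Y.
Hypothesis cut_le_FR :
  forall Yb Y, feasible Z Ycal Yb -> feasible Z Ycal Y -> cutrhs FR Z C Yb Y <= FR Y.
Hypothesis cut_tight : forall Y, feasible Z Ycal Y -> cutrhs FR Z C Y Y = FR Y.
Hypothesis feasible_ex : exists Y, feasible Z Ycal Y.

Lemma master_feas_FR (cuts : {set pair n} -> Prop) Y :
  (forall Yb, cuts Yb -> feasible Z Ycal Yb) -> feasible Z Ycal Y ->
  master_feas FR Z Ycal C cuts (FR Y) Y.
Proof.
by move=> cutsF YF; split=> [|//|Yb /cutsF YbF]; [exact: FR_ge0 | exact: cut_le_FR].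
Qed.

Lemma master_feas_cut_ge (cuts : {set pair n} -> Prop) theta Y :
  cuts Y -> master_feas FR Z Ycal C cuts theta Y -> FR Y <= theta.
Proof. by move=> cutY [_ YF cuts_le]; rewrite -cut_tight // cuts_le. Qed.

Lemma master_opt_stop_optimal (cuts : {set pair n} -> Prop) theta Y :
  (forall Yb, cuts Yb -> feasible Z Ycal Yb) ->
  master_opt FR Z Ycal C cuts theta Y -> FR Y <= theta -> optimal FR Z Ycal Y.
Proof.
move=> cutsF [[_ YF _] theta_min] FR_le; split=> // Y' Y'F.
exact: le_trans FR_le (theta_min _ _ (master_feas_FR cutsF Y'F)).
Qed.

Lemma master_opt_seq_exists (cuts : seq {set pair n}) :
  exists theta Y, master_opt FR Z Ycal C (fun Yb => Yb \in cuts) theta Y.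
Proof.
pose lower Y := \big[Num.max/0]_(Yb <- cuts) cutrhs FR Z C Yb Y.
have [Y YF Y_min] := exists_argmin lower feasible_ex.
exists (lower Y), Y; split=> [|theta' Y' [theta'_ge0 Y'F cuts_le]].
  split=> // [|Yb Yb_cut]; first exact: bigmax_ge_id.
  exact: (le_bigmax_seq _ _ xpredT _ Yb_cut).
apply: le_trans (Y_min _ Y'F) _; rewrite /lower big_seq.
by apply: bigmax_le => // Yb /cuts_le.
Qed.

Lemma master_opt_feasible_exists :
  exists theta Y, master_opt FR Z Ycal C (feasible Z Ycal) theta Y.
Proof.
have [Y YF Y_min] := exists_argmin FR feasible_ex.
exists (FR Y), Y; split=> [|theta' Y' Y'feas]; first exact: master_feas_FR.
have [_ Y'F _] := Y'feas.
exact: le_trans (Y_min _ Y'F) (master_feas_cut_ge Y'F Y'feas).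
Qed.

Lemma master_opt_feasible_optimal theta Y :
  master_opt FR Z Ycal C (feasible Z Ycal) theta Y ->
  optimal FR Z Ycal Y /\ theta = FR Y.
Proof.
move=> opt; have [[_ YF _] theta_min] := opt.
have FR_le := master_feas_cut_ge YF opt.1.
split; first exact: master_opt_stop_optimal opt FR_le.
by apply/le_anti; rewrite FR_le andbT; apply: theta_min; exact: master_feas_FR.
Qed.

Lemma nonstop_run_feasible s Yb :
  nonstop_run FR Z Ycal C s -> Yb \in map snd s -> feasible Z Ycal Yb.
Proof.
move=> run /mapP[[theta Y] /(nthP (0, set0))[k ks sk] ->] /=.
by have := run k ks; rewrite sk => -[[[_ YF _] _] _].
Qed.

Lemma nonstop_run_uniq s : nonstop_run FR Z Ycal C s -> uniq (map snd s).
Proof.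
move=> run; apply: (uniq_nth_notin_take (x0 := set0)) => k; rewrite size_map => ks.
rewrite -map_take (nth_map (0, set0)) //.
have := run k ks; case: (nth _ s k) => theta Y /= [[feas _] FR_gt].
by apply: contraL FR_gt => Y_cut; rewrite -leNgt (master_feas_cut_ge Y_cut feas).
Qed.

Lemma nonstop_run_size s :
  nonstop_run FR Z Ycal C s -> (size s <= #|{: {set pair n}}|)%N.
Proof.
by move/nonstop_run_uniq/card_uniqP; rewrite size_map => <-; exact: max_card.
Qed.

End CuttingPlane.

Theorem proposition3 (R : realFieldType) (n : nat) (alpha : R) (z : 'I_n -> R)
  (v : 'I_n) (E Z : {set pair n}) (Ycal : {set pair n} -> Prop)
  (C : cut_family n) :
  0 < alpha < 1 ->
  (forall u, 0 < z u) -> \sum_u z u = 1 ->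
  [disjoint Z & E] ->
  (exists Y, feasible Z Ycal Y) ->
  valid_family Z C ->
  let FR := fun Y : {set pair n} => first_return_time alpha z v (E :|: Y) in
  (* the cutting plane method is always able to continue (the master problem
     has an optimal solution) ... *)
  (forall s, nonstop_run FR Z Ycal C s ->
     exists theta Y, master_opt FR Z Ycal C (fun Yb => Yb \in map snd s) theta Y) /\
  (* ... it terminates after finitely many iterations ... *)
  (exists N : nat, forall s, nonstop_run FR Z Ycal C s -> (size s <= N)%N) /\
  (* ... and at termination y* is optimal *)
  (forall s theta Y, nonstop_run FR Z Ycal C s ->
     master_opt FR Z Ycal C (fun Yb => Yb \in map snd s) theta Y ->
     FR Y <= theta -> optimal FR Z Ycal Y) /\
  (* equivalently: the master problem with all cuts C(Yb), Yb feasible,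
     has the same optimal value as min { FR y : y feasible } *)
  (exists theta Y, master_opt FR Z Ycal C (feasible Z Ycal) theta Y) /\
  (forall theta Y, master_opt FR Z Ycal C (feasible Z Ycal) theta Y ->
     exists Y', optimal FR Z Ycal Y' /\ theta = FR Y').
Proof.
(* The cuts are valid for any objective: [Z] and [E] need not be disjoint. *)
move=> /andP[alpha_gt0 alpha_lt1] z_gt0 z_sum1 _ feasible_ex valid FR.
have FR_ge0 Y : feasible Z Ycal Y -> 0 <= FR Y.
  by move=> _; apply: first_return_time_ge0 => // [||u]; rewrite ltW.
have cut_le_FR Yb Y :
    feasible Z Ycal Yb -> feasible Z Ycal Y -> cutrhs FR Z C Yb Y <= FR Y.
  by move=> _ [YZ _]; exact: cutrhs_le_FR.
have cut_tight Y : feasible Z Ycal Y -> cutrhs FR Z C Y Y = FR Y.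
  by move=> _; exact: cutrhs_tight.
split; first by move=> s _; exact: master_opt_seq_exists.
split; first by exists #|{: {set pair n}}|; exact: nonstop_run_size.
split.
  move=> s theta Y run; apply: master_opt_stop_optimal => // Yb.
  exact: nonstop_run_feasible run.
split; first exact: master_opt_feasible_exists.
by move=> theta Y /master_opt_feasible_optimal[] // Yopt ->; exists Y.
Qed.
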